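(* Let $S\subset\mathbf R^4$ be an oriented immersed surface and let $\Gamma=(\Gamma_1,\Gamma_2):S\to \mathbf S^2\times\mathbf S^2$ be its Gauss map in sphere (Klein) coordinates. Then $S$ is congruent (i.e. mapped by a rigid motion of $\mathbf R^4$, a composition of a translation and an orthogonal linear map) to a Lagrangean surface of $(\mathbf R^4,\omega)$, $\omega=\mathrm dx\wedge \mathrm du+\mathrm dy\wedge\mathrm dv$, if and only if the image of $\Gamma_1$ or the image of $\Gamma_2$ is contained in a great circle of $\mathbf S^2$.
   Context: Coordinates on $\mathbf R^4$ are $(x,y,u,v)$ with standard orthonormal basis $e_1,e_2,e_3,e_4$. A Lagrangean surface of $(\mathbf R^4,\omega)$ is an immersed surface $L$ with $i^*\omega\equiv 0$, $i$ the immersion. For an oriented plane $P$ spanned by an oriented orthonormal pair $v_1=\sum c_ie_i$, $v_2=\sum d_ie_i$, its Plücker coordinates are $p_{ij}=c_id_j-c_jd_i$, so that $P=(p_{12},p_{13},p_{14},p_{34},p_{42},p_{23})\in\mathbf S^5\subset\mathbf R^6$ (note $p_{42}=-p_{24}$). Its Klein (sphere) coordinates are $a=(p_{12}+p_{34},\,p_{13}+p_{42},\,p_{14}+p_{23})$ and $b=(p_{12}-p_{34},\,p_{13}-p_{42},\,p_{14}-p_{23})$, both unit vectors in $\mathbf R^3$, giving $G_{2,4}\cong\mathbf S^2\times\mathbf S^2$. The Gauss map sends $p\in S$ to the oriented tangent plane $T_pS$ (translated to the origin); $\Gamma_1(p)=a(T_pS)$, $\Gamma_2(p)=b(T_pS)$.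 A great circle of $\mathbf S^2$ is its intersection with a plane through the origin. *)

From HB Require Import structures.
From mathcomp Require Import all_boot all_order all_algebra.
From mathcomp Require Import all_classical all_reals all_analysis.
Set Implicit Arguments. Unset Strict Implicit. Unset Printing Implicit Defensive.
Import Order.TTheory GRing.Theory Num.Theory.
Import numFieldNormedType.Exports.
Local Open Scope classical_set_scope.
Local Open Scope ring_scope.

Section Defs.
Variable R : realType.

(* Points of R^4 are row vectors 'rV[R]_4; coordinates (x,y,u,v) are the
   entries with indices 0,1,2,3 (so e_1..e_4 correspond to indices 0..3). *)
Definition crd (w : 'rV[R]_4) (i : nat) : R := w ord0 (inord i).

Definition dot4 (w z : 'rV[R]_4) : R := \sum_(i < 4) w ord0 i * z ord0 i.
Definition norm4 (w : 'rV[R]_4) : R := Num.sqrt (dot4 w w).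

Definition e2 (k : 'I_2) : 'rV[R]_2 := \row_(j < 2) (if j == k then 1 else 0).

Record spatch := SPatch { pdom : set 'rV[R]_2 ; pmap : 'rV[R]_2 -> 'rV[R]_4 }.

Definition dpart (f : 'rV[R]_2 -> 'rV[R]_4) (p : 'rV[R]_2) (k : 'I_2) : 'rV[R]_4 :=
  'D_(e2 k) f p.

Definition immersed_patch (P : spatch) : Prop :=
  open (pdom P) /\
  forall p, pdom P p ->
    differentiable (pmap P) p /\
    row_free (col_mx (dpart (pmap P) p ord0) (dpart (pmap P) p (lift ord0 ord0))).

(* An oriented immersed surface is described by a family of oriented
   immersed local parametrizations (an oriented atlas of the immersion). *)
Definition oriented_immersed_surface (I : Type) (S : I -> spatch) : Prop :=
  forall i, immersed_patch (S i).

Definition tv1 (f : 'rV[R]_2 -> 'rV[R]_4) p : 'rV[R]_4 :=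
  (norm4 (dpart f p ord0))^-1 *: dpart f p ord0.
Definition tv2 (f : 'rV[R]_2 -> 'rV[R]_4) p : 'rV[R]_4 :=
  let t2 := dpart f p (lift ord0 ord0) in
  let w := t2 - dot4 t2 (tv1 f p) *: tv1 f p in
  (norm4 w)^-1 *: w.

(* Pluecker coordinates p_ij = c_i d_j - c_j d_i (1-based indices i,j) *)
Definition plk (v1 v2 : 'rV[R]_4) (i j : nat) : R :=
  crd v1 i.-1 * crd v2 j.-1 - crd v1 j.-1 * crd v2 i.-1.

(* Klein (sphere) coordinates a and b of the oriented plane spanned by the
   oriented orthonormal pair (v1,v2). Note p_42 = plk _ _ 4 2. *)
Definition klein_a (v1 v2 : 'rV[R]_4) : 'rV[R]_3 :=
  \row_(k < 3) [:: plk v1 v2 1 2 + plk v1 v2 3 4;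
                   plk v1 v2 1 3 + plk v1 v2 4 2;
                   plk v1 v2 1 4 + plk v1 v2 2 3]`_k.
Definition klein_b (v1 v2 : 'rV[R]_4) : 'rV[R]_3 :=
  \row_(k < 3) [:: plk v1 v2 1 2 - plk v1 v2 3 4;
                   plk v1 v2 1 3 - plk v1 v2 4 2;
                   plk v1 v2 1 4 - plk v1 v2 2 3]`_k.

Definition Gamma1 (P : spatch) (p : 'rV[R]_2) : 'rV[R]_3 :=
  klein_a (tv1 (pmap P) p) (tv2 (pmap P) p).
Definition Gamma2 (P : spatch) (p : 'rV[R]_2) : 'rV[R]_3 :=
  klein_b (tv1 (pmap P) p) (tv2 (pmap P) p).

Definition gauss_image (G : spatch -> 'rV[R]_2 -> 'rV[R]_3)
  (I : Type) (S : I -> spatch) : set 'rV[R]_3 :=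
  [set y | exists i p, pdom (S i) p /\ y = G (S i) p].

Definition dot3 (w z : 'rV[R]_3) : R := \sum_(i < 3) w ord0 i * z ord0 i.

Definition sphere2 : set 'rV[R]_3 := [set y | dot3 y y = 1].
Definition great_circle (n : 'rV[R]_3) : set 'rV[R]_3 :=
  sphere2 `&` [set y | dot3 n y = 0].
Definition contained_in_great_circle (A : set 'rV[R]_3) : Prop :=
  exists n : 'rV[R]_3, n != 0 /\ A `<=` great_circle n.

Definition omega (X Y : 'rV[R]_4) : R :=
  (crd X 0 * crd Y 2 - crd X 2 * crd Y 0) + (crd X 1 * crd Y 3 - crd X 3 * crd Y 1).

Definition lagrangean_surface (I : Type) (S : I -> spatch) : Prop :=
  forall i p, pdom (S i) p ->
    omega (dpart (pmap (S i)) p ord0) (dpart (pmap (S i)) p (lift ord0 ord0)) = 0.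

Definition orthogonal_mx (A : 'M[R]_4) : Prop := A *m A^T = 1%:M.

Definition move_patch (A : 'M[R]_4) (c : 'rV[R]_4) (P : spatch) : spatch :=
  SPatch (pdom P) (fun p => pmap P p *m A + c).

Definition congruent_to_lagrangean (I : Type) (S : I -> spatch) : Prop :=
  exists (A : 'M[R]_4) (c : 'rV[R]_4), orthogonal_mx A /\
    lagrangean_surface (fun i => move_patch A c (S i)).

End Defs.

(* Let K = A W A^T, with W the matrix of omega, be the coefficient matrix of
   the pulled-back form omega(. A, . A). Writing a 2-form in Klein coordinates
   (s, t), one gets
   omega(X A, Y A) = (<s, a(X, Y)> + <t, b(X, Y)>) / 2, and the Gauss map of a
   surface is a nonzero multiple of (a, b) evaluated on the coordinate partial
   derivatives. For A orthogonal, K is an orthogonal complex structure, hence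
   self-dual or anti-self-dual: exactly one of s, t vanishes. So the moved
   surface is Lagrangean iff Gamma_2 (resp. Gamma_1) stays orthogonal to the
   nonzero vector t (resp. s), i.e. lies on a great circle. Conversely, the
   matrices of quaternion multiplication realize every direction of s or t,
   because the Hopf map hits every line of R^3. *)

From Pilot Require Import Defs.
From HB Require Import structures.
From mathcomp Require Import all_boot all_order all_algebra.
From mathcomp Require Import all_classical all_reals all_analysis.
From mathcomp Require Import ring lra.
Set Implicit Arguments. Unset Strict Implicit. Unset Printing Implicit Defensive.
Import Order.TTheory GRing.Theory Num.Theory.
Local Open Scope ring_scope.

Section Coordinates.
Variable R : realType.
Implicit Types (w z : 'rV[R]_4) (M N : 'M[R]_4).

Definition row3 (a b c : R) : 'rV[R]_3 := \row_(k < 3) [:: a; b; c]`_k.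

Definition row4 (a b c d : R) : 'rV[R]_4 := \row_(k < 4) [:: a; b; c; d]`_k.

Definition mx4 (s : seq (seq R)) : 'M[R]_4 := \matrix_(i, j) nth 0 (nth [::] s i) j.

Lemma sum4 (F : 'I_4 -> R) :
  \sum_(i < 4) F i = F (inord 0) + F (inord 1) + F (inord 2) + F (inord 3).
Proof.
rewrite !big_ord_recl big_ord0 addr0 !addrA.
by congr (_ + _ + _ + _); congr F; apply/val_inj; rewrite /= inordK.
Qed.

Lemma mx4P M N :
  (forall i j, (i < 4)%N -> (j < 4)%N -> M (inord i) (inord j) = N (inord i) (inord j)) ->
  M = N.
Proof.
move=> eqMN; apply/matrixP => i j.
by have := eqMN i j (ltn_ord i) (ltn_ord j); rewrite !inord_val.
Qed.

Lemma mulmx4E m n (M : 'M[R]_(m, 4)) (N : 'M[R]_(4, n)) i j : (M *m N) i j =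
  M i (inord 0) * N (inord 0) j + M i (inord 1) * N (inord 1) j
  + M i (inord 2) * N (inord 2) j + M i (inord 3) * N (inord 3) j.
Proof. by rewrite mxE sum4. Qed.

Lemma dot4E w z : dot4 w z = crd w 0 * crd z 0 + crd w 1 * crd z 1
   + crd w 2 * crd z 2 + crd w 3 * crd z 3.
Proof. by rewrite /dot4 sum4. Qed.

Lemma crd_row4 a b c d i : (i < 4)%N -> crd (row4 a b c d) i = [:: a; b; c; d]`_i.
Proof. by move=> lti; rewrite /crd mxE inordK. Qed.

Lemma crdZ a w i : crd (a *: w) i = a * crd w i.
Proof. by rewrite /crd mxE. Qed.

Lemma crdB w z i : crd (w - z) i = crd w i - crd z i.
Proof. by rewrite /crd !mxE. Qed.

Lemma dot3_row3 a b c a' b' c' :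
  dot3 (row3 a b c) (row3 a' b' c') = a * a' + b * b' + c * c'.
Proof. by rewrite /dot3 !big_ord_recl big_ord0 !mxE /= addr0 addrA. Qed.

Lemma dot30 (v : 'rV[R]_3) : dot3 0 v = 0.
Proof. by rewrite /dot3 big1 // => i _; rewrite mxE mul0r. Qed.

Lemma dot3Zr k (u v : 'rV[R]_3) : dot3 u (k *: v) = k * dot3 u v.
Proof. by rewrite /dot3 mulr_sumr; apply: eq_bigr => i _; rewrite mxE mulrCA. Qed.

Lemma dot3Zl k (u v : 'rV[R]_3) : dot3 (k *: u) v = k * dot3 u v.
Proof. by rewrite /dot3 mulr_sumr; apply: eq_bigr => i _; rewrite mxE mulrA. Qed.

Lemma scale_row3 k a b c : k *: row3 a b c = row3 (k * a) (k * b) (k * c).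
Proof. by apply/matrixP => i [[|[|[|//]]] ?]; rewrite !mxE. Qed.

Lemma row3_eq0 a b c : (row3 a b c == 0) = [&& a == 0, b == 0 & c == 0].
Proof.
apply/eqP/and3P => [/matrixP eq0 | [/eqP-> /eqP-> /eqP->]].
  by split; apply/eqP; [move: (eq0 0 0) | move: (eq0 0 1) | move: (eq0 0 2)];
     rewrite !mxE.
by apply/matrixP => i [[|[|[|//]]] ?]; rewrite !mxE.
Qed.

Lemma row3_eta (v : 'rV[R]_3) :
  v = row3 (v 0 (inord 0)) (v 0 (inord 1)) (v 0 (inord 2)).
Proof.
apply/matrixP => i j; rewrite (ord1 i) mxE.
by case: j => [[|[|[|//]]] ?]; congr (v 0 _); apply/val_inj; rewrite /= inordK.
Qed.

Lemma dot4C w z : dot4 w z = dot4 z w.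
Proof. rewrite !dot4E; ring. Qed.

Lemma dot4Z a b w z : dot4 (a *: w) (b *: z) = a * b * dot4 w z.
Proof. rewrite !dot4E !crdZ; ring. Qed.

Lemma dot4Zr a w z : dot4 w (a *: z) = a * dot4 w z.
Proof. rewrite !dot4E !crdZ; ring. Qed.

Lemma dot4B w z z' : dot4 w (z - z') = dot4 w z - dot4 w z'.
Proof. rewrite !dot4E !crdB; ring. Qed.

Lemma dot4_ge0 w : 0 <= dot4 w w.
Proof. by rewrite /dot4 sumr_ge0 // => i _; rewrite -expr2 sqr_ge0. Qed.

Lemma dot4_eq0 w : (dot4 w w == 0) = (w == 0).
Proof.
apply/eqP/eqP => [|->]; last by rewrite /dot4 big1 // => i _; rewrite mxE mul0r.
move=> /eqP; rewrite psumr_eq0 => [/allP w0|i _]; last by rewrite -expr2 sqr_ge0.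
apply/matrixP => i j; rewrite (ord1 i) mxE.
by have /implyP/(_ isT) := w0 j (mem_index_enum j); rewrite mulf_eq0 orbb => /eqP.
Qed.

Lemma norm4_sq w : norm4 w ^+ 2 = dot4 w w.
Proof. by rewrite sqr_sqrtr // dot4_ge0. Qed.

Lemma norm4_eq0 w : (norm4 w == 0) = (w == 0).
Proof. by rewrite sqrtr_eq0 -dot4_eq0 eq_le dot4_ge0 andbT. Qed.

Lemma normalize_unit w : w != 0 ->
  dot4 ((norm4 w)^-1 *: w) ((norm4 w)^-1 *: w) = 1.
Proof.
rewrite -norm4_eq0 => w0; rewrite dot4Z -invrM ?unitfE // -expr2 /norm4.
by rewrite sqr_sqrtr ?dot4_ge0 // mulVf // -/(norm4 w) -norm4_sq expf_neq0.
Qed.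

End Coordinates.

Section Klein.
Variable R : realType.
Implicit Types (X Y : 'rV[R]_4).

Lemma klein_aE X Y : klein_a X Y = row3 (plk X Y 1 2 + plk X Y 3 4)
  (plk X Y 1 3 + plk X Y 4 2) (plk X Y 1 4 + plk X Y 2 3).
Proof. by []. Qed.

Lemma klein_bE X Y : klein_b X Y = row3 (plk X Y 1 2 - plk X Y 3 4)
  (plk X Y 1 3 - plk X Y 4 2) (plk X Y 1 4 - plk X Y 2 3).
Proof. by []. Qed.

Lemma dot3_klein_a X Y :
  dot3 (klein_a X Y) (klein_a X Y) = dot4 X X * dot4 Y Y - dot4 X Y ^+ 2.
Proof. rewrite klein_aE dot3_row3 !dot4E /plk /=; ring. Qed.

Lemma dot3_klein_b X Y :
  dot3 (klein_b X Y) (klein_b X Y) = dot4 X X * dot4 Y Y - dot4 X Y ^+ 2.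
Proof. rewrite klein_bE dot3_row3 !dot4E /plk /=; ring. Qed.

Lemma klein_a_shear a b c X Y :
  klein_a (a *: X) (b *: (Y - c *: X)) = (a * b) *: klein_a X Y.
Proof. rewrite !klein_aE scale_row3 /plk !crdZ !crdB !crdZ; congr row3; ring. Qed.

Lemma klein_b_shear a b c X Y :
  klein_b (a *: X) (b *: (Y - c *: X)) = (a * b) *: klein_b X Y.
Proof. rewrite !klein_bE scale_row3 /plk !crdZ !crdB !crdZ; congr row3; ring. Qed.

End Klein.

Section GramSchmidt.
Variable R : realType.
Implicit Types (X Y : 'rV[R]_4).

Lemma row_free_col_mx2 X Y : row_free (col_mx X Y) ->
  forall a b, a *: X + b *: Y = 0 -> a = 0 /\ b = 0.
Proof.
move=> free a b comb0.
have := @row_free_inj _ 1 _ _ _ free (row_mx a%:M b%:M) 0.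
rewrite mul_row_col !mul_scalar_mx mul0mx -row_mx0 => /(_ comb0) /eq_row_mx[].
by move=> /matrixP /(_ 0 0) + /matrixP /(_ 0 0); rewrite !mxE /= !mulr1n.
Qed.

Variables (f : 'rV[R]_2 -> 'rV[R]_4) (p : 'rV[R]_2).
Let X := dpart f p ord0.
Let Y := dpart f p (lift ord0 ord0).
Hypothesis free : row_free (col_mx X Y).

Let u := tv1 f p.
Let w := Y - dot4 Y u *: u.

Let X_neq0 : X != 0.
Proof.
apply/eqP => X0; have [|/eqP + _] := row_free_col_mx2 free (a := 1) (b := 0).
  by rewrite X0 scaler0 scale0r addr0.
by rewrite oner_eq0.
Qed.

Let w_shear : w = Y - (dot4 Y u * (norm4 X)^-1) *: X.
Proof. by rewrite /w /u /tv1 scalerA. Qed.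

Let w_neq0 : w != 0.
Proof.
apply/eqP => w0; have [|_ /eqP] := row_free_col_mx2 free
  (a := - (dot4 Y u * (norm4 X)^-1)) (b := 1).
  by rewrite scale1r scaleNr addrC -w_shear w0.
by rewrite oner_eq0.
Qed.

Lemma tv_orthonormal : [/\ dot4 (tv1 f p) (tv1 f p) = 1,
  dot4 (tv2 f p) (tv2 f p) = 1 & dot4 (tv1 f p) (tv2 f p) = 0].
Proof.
have uu : dot4 u u = 1 by rewrite normalize_unit.
have uw : dot4 u w = 0.
  by rewrite dot4B dot4Zr uu dot4C mulr1 subrr.
change (tv2 f p) with ((norm4 w)^-1 *: w).
by split; rewrite ?normalize_unit // dot4Zr -/u uw mulr0.
Qed.

Lemma klein_tv_partials : exists2 k : R, k != 0 &
  klein_a (tv1 f p) (tv2 f p) = k *: klein_a X Y /\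
  klein_b (tv1 f p) (tv2 f p) = k *: klein_b X Y.
Proof.
have tv2E : tv2 f p = (norm4 w)^-1 *: (Y - (dot4 Y u * (norm4 X)^-1) *: X).
  by rewrite -w_shear.
exists ((norm4 X)^-1 * (norm4 w)^-1).
  by rewrite mulf_neq0 // invr_eq0 norm4_eq0.
by rewrite tv2E klein_a_shear klein_b_shear.
Qed.

Lemma klein_tv_unit :
  dot3 (klein_a (tv1 f p) (tv2 f p)) (klein_a (tv1 f p) (tv2 f p)) = 1 /\
  dot3 (klein_b (tv1 f p) (tv2 f p)) (klein_b (tv1 f p) (tv2 f p)) = 1.
Proof.
have [t11 t22 t12] := tv_orthonormal.
by rewrite dot3_klein_a dot3_klein_b t11 t22 t12 expr0n /= mulr1 subr0.
Qed.

End GramSchmidt.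

Section AffineDerivative.
Variables (R : realType) (V : normedModType R) (m n k : nat).

Lemma derive_mulmx_addr (f : V -> 'M[R]_(m, n)) (A : 'M[R]_(n, k)) c x v :
  derivable f x v -> 'D_v (fun y => f y *m A + c) x = 'D_v f x *m A.
Proof.
move=> df.
have dfij i j : derivable (fun y => f y i j) x v by exact: (derivable_mxP f x v).1 df i j.
have dterm i j l : derivable (fun y => f y i l * A l j) x v.
  exact: derivableM (dfij i l) (derivable_cst (A l j) x v).
have entryE i j : (fun y => (f y *m A + c) i j) =
    (\sum_(l < n) (fun y => f y i l * A l j)) + cst (c i j).
  by apply/funext => y; rewrite !mxE fct_sumE.
have dg : derivable (fun y => f y *m A + c) x v.
  apply/derivable_mxP => i j; rewrite entryE.
  by apply: derivableD; [exact: derivable_sum | exact: derivable_cst].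
rewrite (derive_mx dg) (derive_mx df); apply/matrixP => i j.
rewrite !mxE entryE deriveD ?derive_cst ?addr0; last exact: derivable_cst.
  rewrite derive_sum //; apply: eq_bigr => l _; rewrite mxE.
  rewrite (deriveM (dfij i l) (derivable_cst (A l j) x v)).
  by rewrite derive_cst scaler0 add0r mulrC.
exact: derivable_sum.
Qed.

End AffineDerivative.

Lemma outer_prod_eq0 (F : idomainType) (m n : nat) (u : 'rV[F]_m) (v : 'rV[F]_n) :
  u^T *m v = 0 -> u = 0 \/ v = 0.
Proof.
move=> /matrixP uv0; have [->|/matrix0Pn [i [j uij]]] := eqVneq u 0; first by left.
right; apply/matrixP => i' k; rewrite (ord1 i') (ord1 i) in uij *.
have /eqP := uv0 j k; rewrite !mxE big_ord1 !mxE mulf_eq0 (negbTE uij) /=.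
by move/eqP.
Qed.

Section TwoForms.
Variable R : realType.
Implicit Types (X Y : 'rV[R]_4) (A K : 'M[R]_4).

Local Notation "K _[ i , j ]" := (K (@inord 3 i%N) (@inord 3 j%N))
  (at level 9, i, j at level 50, format "K _[ i ,  j ]").

Definition omega_mx : 'M[R]_4 :=
  mx4 [:: [:: 0; 0; 1; 0]; [:: 0; 0; 0; 1]; [:: -1; 0; 0; 0]; [:: 0; -1; 0; 0]].

Lemma omegaE X Y : omega X Y = (X *m omega_mx *m Y^T) 0 0.
Proof. rewrite !mxE sum4 !mxE !sum4 !mxE !inordK //= /omega /crd; ring. Qed.

Lemma omega_mx_antisym : omega_mx^T = - omega_mx.
Proof.
apply: mx4P => i j lti ltj; rewrite !mxE !inordK //.
by case: i lti => [|[|[|[|//]]]] _; case: j ltj => [|[|[|[|//]]]] _ /=;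
   rewrite ?oppr0 ?opprK.
Qed.

Lemma omega_mx_orthogonal : omega_mx *m omega_mx^T = 1%:M.
Proof.
apply: mx4P => i j lti ltj; rewrite mulmx4E !mxE -val_eqE /= !inordK //.
by case: i lti => [|[|[|[|//]]]] _; case: j ltj => [|[|[|[|//]]]] _ /=; ring.
Qed.

(* Klein coordinates of the 2-form sum_(i<j) K_ij dx_i /\ dx_j; the indices of
   K are 0-based, those of plk 1-based. *)
Definition form_a K : 'rV[R]_3 :=
  row3 (K _[0, 1] + K _[2, 3]) (K _[0, 2] - K _[1, 3]) (K _[0, 3] + K _[1, 2]).
Definition form_b K : 'rV[R]_3 :=
  row3 (K _[0, 1] - K _[2, 3]) (K _[0, 2] + K _[1, 3]) (K _[0, 3] - K _[1, 2]).

Section Skew.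
Variable K : 'M[R]_4.
Hypothesis K_antisym : K^T = - K.

Let skew i j : K _[j, i] = - K _[i, j].
Proof.
by have := congr1 (fun M : 'M[R]_4 => M (inord i) (inord j)) K_antisym; rewrite !mxE.
Qed.

Let skew_diag i : K _[i, i] = 0.
Proof. by have := skew i i; lra. Qed.

Lemma bilinear_klein X Y : (X *m K *m Y^T) 0 0 =
  (dot3 (form_a K) (klein_a X Y) + dot3 (form_b K) (klein_b X Y)) / 2.
Proof.
rewrite !mxE sum4 !mxE !sum4 ?mxE klein_aE klein_bE !dot3_row3 /plk /crd /=.
rewrite !skew_diag (skew 0 1) (skew 0 2) (skew 0 3) (skew 1 2) (skew 1 3) (skew 2 3).
by field.
Qed.

Hypothesis K_orthogonal : K *m K^T = 1%:M.

(* K is an orthogonal complex structure: such a form is self-dual or anti-self-dual. *)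
Lemma form_ab_dichotomy :
  (form_a K = 0 /\ form_b K != 0) \/ (form_b K = 0 /\ form_a K != 0).
Proof.
have gram i j : (i < 4)%N -> (j < 4)%N -> K _[i, 0] * K _[j, 0] + K _[i, 1] * K _[j, 1]
    + K _[i, 2] * K _[j, 2] + K _[i, 3] * K _[j, 3] = (i == j)%:R.
  move=> lti ltj; have := congr1 (fun M : 'M[R]_4 => M (inord i) (inord j)) K_orthogonal.
  by rewrite mulmx4E !mxE -val_eqE /= !inordK.
have := gram 0%N 0%N isT isT; have := gram 1%N 1%N isT isT.
have := gram 2%N 2%N isT isT; have := gram 3%N 3%N isT isT.
have := gram 0%N 1%N isT isT; have := gram 0%N 2%N isT isT.
have := gram 0%N 3%N isT isT; have := gram 1%N 2%N isT isT.
have := gram 1%N 3%N isT isT; have := gram 2%N 3%N isT isT.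
rewrite !skew_diag (skew 0 1) (skew 0 2) (skew 0 3) (skew 1 2) (skew 1 3) (skew 2 3) /=.
move=> g23 g13 g12 g03 g02 g01 g33 g22 g11 g00.
have outer : (form_a K)^T *m form_b K = 0.
  apply/matrixP => i j; rewrite !mxE big_ord1 !mxE.
  by case: i => [[|[|[|//]]] ?]; case: j => [[|[|[|//]]] ?] /=; lra.
have normab : dot3 (form_a K) (form_a K) + dot3 (form_b K) (form_b K) = 4.
  rewrite !dot3_row3; lra.
have [a0 | b0] := outer_prod_eq0 outer; [left | right]; split => //.
- by apply/eqP => b0; move: normab; rewrite a0 b0 !dot30; lra.
- by apply/eqP => a0; move: normab; rewrite a0 b0 !dot30; lra.
Qed.

End Skew.

End TwoForms.

Arguments omega_mx {R}.

Section Pullback.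
Variable R : realType.
Implicit Types (X Y : 'rV[R]_4) (A : 'M[R]_4).

Definition pullback_omega A : 'M[R]_4 := A *m omega_mx *m A^T.

Lemma omega_mulmx X Y A :
  omega (X *m A) (Y *m A) = (X *m pullback_omega A *m Y^T) 0 0.
Proof. by rewrite omegaE trmx_mul !mulmxA. Qed.

Lemma pullback_omega_antisym A : (pullback_omega A)^T = - pullback_omega A.
Proof. by rewrite !trmx_mul trmxK omega_mx_antisym mulNmx mulmxN mulmxA. Qed.

Lemma pullback_omega_orthogonal A : A *m A^T = 1%:M ->
  pullback_omega A *m (pullback_omega A)^T = 1%:M.
Proof.
move=> orthA; rewrite !trmx_mul trmxK !mulmxA -(mulmxA _ A^T) (mulmx1C orthA) mulmx1.
by rewrite -(mulmxA _ omega_mx) omega_mx_orthogonal mulmx1.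
Qed.

End Pullback.

Section Quaternions.
Variable R : realType.
Implicit Types (q : 'rV[R]_4) (m : 'rV[R]_3).

(* The image of e_2 under the rotation induced by q0 + q1 i + q2 j + q3 k. *)
Definition hopf q : 'rV[R]_3 :=
  let: (q0, q1, q2, q3) := (crd q 0, crd q 1, crd q 2, crd q 3) in
  row3 (2 * (q1 * q2 - q0 * q3)) (q0 ^+ 2 + q2 ^+ 2 - q1 ^+ 2 - q3 ^+ 2)
       (2 * (q0 * q1 + q2 * q3)).

Definition quat_b q : 'M[R]_4 :=
  let: (q0, q1, q2, q3) := (crd q 0, crd q 1, crd q 2, crd q 3) in
  mx4 [:: [:: q0; q1; q2; q3]; [:: - q1; q0; - q3; q2];
          [:: - q2; q3; q0; - q1]; [:: - q3; - q2; q1; q0]].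

(* Orientation reversing, so it realizes hopf q on the self-dual side. *)
Definition quat_a q : 'M[R]_4 :=
  let: (q0, q1, q2, q3) := (crd q 0, crd q 1, crd q 2, crd q 3) in
  mx4 [:: [:: q0; - q1; - q2; q3]; [:: q1; q0; - q3; - q2];
          [:: q2; q3; q0; q1]; [:: q3; - q2; q1; - q0]].

Lemma quat_b_gram q : quat_b q *m (quat_b q)^T = (dot4 q q)%:M.
Proof.
apply: mx4P => i j lti ltj; rewrite mulmx4E !mxE dot4E -val_eqE /= !inordK //.
by case: i lti => [|[|[|[|//]]]] _; case: j ltj => [|[|[|[|//]]]] _ /=; ring.
Qed.

Lemma quat_a_gram q : quat_a q *m (quat_a q)^T = (dot4 q q)%:M.
Proof.
apply: mx4P => i j lti ltj; rewrite mulmx4E !mxE dot4E -val_eqE /= !inordK //.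
by case: i lti => [|[|[|[|//]]]] _; case: j ltj => [|[|[|[|//]]]] _ /=; ring.
Qed.

Lemma form_ab_quat_b q :
  form_a (pullback_omega (quat_b q)) = 0 /\
  form_b (pullback_omega (quat_b q)) = 2 *: hopf q.
Proof.
split; apply/matrixP => i [[|[|[|//]]] ?];
  rewrite !mxE /= !sum4 !mxE !sum4 !mxE !inordK //=; ring.
Qed.

Lemma form_ab_quat_a q :
  form_a (pullback_omega (quat_a q)) = 2 *: hopf q /\
  form_b (pullback_omega (quat_a q)) = 0.
Proof.
split; apply/matrixP => i [[|[|[|//]]] ?];
  rewrite !mxE /= !sum4 !mxE !sum4 !mxE !inordK //=; ring.
Qed.

Lemma hopfZ a q : hopf (a *: q) = a ^+ 2 *: hopf q.
Proof. rewrite /hopf !crdZ scale_row3; congr row3; ring. Qed.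

Lemma hopf_hits_line m : m != 0 ->
  exists q, exists2 mu : R, q != 0 /\ mu != 0 & hopf q = mu *: m.
Proof.
rewrite [m]row3_eta; set m1 := m 0 _; set m2 := m 0 _; set m3 := m 0 _ => m0.
set r := Num.sqrt (m1 ^+ 2 + m2 ^+ 2 + m3 ^+ 2).
have r2 : r ^+ 2 = m1 ^+ 2 + m2 ^+ 2 + m3 ^+ 2 by rewrite sqr_sqrtr // !addr_ge0 ?sqr_ge0.
(* (0, m1, m2 + |m|, m3) is the half-angle quaternion turning e_2 towards m; it
   degenerates only when m points along - e_2. *)
have [m2r0 | m2r_neq0] := eqVneq (m2 + r) 0; last first.
  exists (row4 0 m1 (m2 + r) m3), (2 * (m2 + r)); last first.
    rewrite /hopf !crd_row4 // scale_row3 /=; congr row3; [ring | | ring].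
    by rewrite expr0n /= add0r sqrrD r2; ring.
  split; last by rewrite mulf_neq0 ?pnatr_eq0.
  by apply/matrix0Pn; exists 0, (inord 2); rewrite mxE inordK.
have : m1 ^+ 2 + m3 ^+ 2 == 0.
  by apply/eqP; move: r2; rewrite (_ : r = - m2) ?sqrrN; lra.
rewrite paddr_eq0 ?sqr_ge0 // !sqrf_eq0 => /andP[/eqP m1_0 /eqP m3_0].
have m2_neq0 : m2 != 0.
  by apply: contra_neq m0 => m2_0; apply/eqP; rewrite row3_eq0 m1_0 m2_0 m3_0 eqxx.
exists (row4 1 0 0 0), m2^-1; last first.
  by rewrite /hopf !crd_row4 // scale_row3 /= m1_0 m3_0; congr row3; field.
split; last by rewrite invr_eq0.
by apply/matrix0Pn; exists 0, (inord 0); rewrite mxE inordK ?oner_neq0.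
Qed.

Lemma hopf_hits_line_unit m : m != 0 ->
  exists2 q, dot4 q q = 1 & exists2 mu : R, mu != 0 & hopf q = mu *: m.
Proof.
move=> /hopf_hits_line [q [mu [q0 mu0] hq]].
exists ((norm4 q)^-1 *: q); first exact: normalize_unit.
exists ((norm4 q)^-1 ^+ 2 * mu); last by rewrite hopfZ hq scalerA.
by rewrite mulf_neq0 // expf_neq0 // invr_eq0 norm4_eq0.
Qed.

Lemma orthogonal_realizing_form_b m : m != 0 ->
  exists2 A : 'M[R]_4, A *m A^T = 1%:M & form_a (pullback_omega A) = 0 /\
    exists2 lam : R, lam != 0 & form_b (pullback_omega A) = lam *: m.
Proof.
move=> /hopf_hits_line_unit [q q1 [mu mu0 hq]].
exists (quat_b q); first by rewrite quat_b_gram q1.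
have [-> ->] := form_ab_quat_b q; split => //.
by exists (2 * mu); rewrite ?mulf_neq0 ?pnatr_eq0 // hq scalerA.
Qed.

Lemma orthogonal_realizing_form_a m : m != 0 ->
  exists2 A : 'M[R]_4, A *m A^T = 1%:M & form_b (pullback_omega A) = 0 /\
    exists2 lam : R, lam != 0 & form_a (pullback_omega A) = lam *: m.
Proof.
move=> /hopf_hits_line_unit [q q1 [mu mu0 hq]].
exists (quat_a q); first by rewrite quat_a_gram q1.
have [-> ->] := form_ab_quat_a q; split => //.
by exists (2 * mu); rewrite ?mulf_neq0 ?pnatr_eq0 // hq scalerA.
Qed.

End Quaternions.

Section Surfaces.
Variable R : realType.

Lemma Gamma_sphere (P : spatch R) p : immersed_patch P -> pdom P p ->
  sphere2 (Gamma1 P p) /\ sphere2 (Gamma2 P p).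
Proof. by move=> [_ /(_ p) imm] /imm [_ /klein_tv_unit]. Qed.

Lemma dpart_move_patch (P : spatch R) (A : 'M[R]_4) (c : 'rV[R]_4) p k :
  differentiable (Defs.pmap P) p ->
  dpart (Defs.pmap (move_patch A c P)) p k = dpart (Defs.pmap P) p k *m A.
Proof. by move=> fdiff; rewrite /dpart derive_mulmx_addr //; exact: diff_derivable. Qed.

Lemma omega_move_patch_eq0 (P : spatch R) (A : 'M[R]_4) (c : 'rV[R]_4) p :
  immersed_patch P -> pdom P p ->
  (omega (dpart (Defs.pmap (move_patch A c P)) p ord0)
         (dpart (Defs.pmap (move_patch A c P)) p (lift ord0 ord0)) == 0) =
  (dot3 (form_a (pullback_omega A)) (Gamma1 P p)
   + dot3 (form_b (pullback_omega A)) (Gamma2 P p) == 0).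
Proof.
move=> [_ /(_ p) imm] /imm [fdiff free].
have [k k0 [G1 G2]] := klein_tv_partials free.
rewrite /Gamma1 /Gamma2 G1 G2 !dot3Zr -mulrDr mulf_eq0 (negbTE k0) /=.
rewrite !dpart_move_patch // omega_mulmx bilinear_klein ?pullback_omega_antisym //.
by rewrite mulf_eq0 invr_eq0 pnatr_eq0 orbF.
Qed.

Lemma lagrangean_move_patchP (I : Type) (S : I -> spatch R)
    (A : 'M[R]_4) (c : 'rV[R]_4) :
  oriented_immersed_surface S ->
  lagrangean_surface (fun i => move_patch A c (S i)) <->
  (forall i p, pdom (S i) p -> dot3 (form_a (pullback_omega A)) (Gamma1 (S i) p)
                              + dot3 (form_b (pullback_omega A)) (Gamma2 (S i) p) = 0).
Proof.
move=> imm; split => lag i p dom; apply/eqP.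
  by rewrite -(omega_move_patch_eq0 _ c) //; apply/eqP; exact: lag.
by rewrite omega_move_patch_eq0 //; apply/eqP; exact: lag.
Qed.

End Surfaces.

Theorem mainTheorem1 (R : realType) (I : Type) (S : I -> spatch R) :
  oriented_immersed_surface S ->
  (congruent_to_lagrangean S <->
     (contained_in_great_circle (gauss_image (@Gamma1 R) S) \/
      contained_in_great_circle (gauss_image (@Gamma2 R) S))).
Proof.
move=> imm; split.
- case=> A [c [orthA /(lagrangean_move_patchP A c imm) lag]].
  have [[a0 b0] | [b0 a0]] := form_ab_dichotomy (pullback_omega_antisym A)
    (pullback_omega_orthogonal orthA); [right | left].
  + exists (form_b (pullback_omega A)); split => // _ [i [p [dom ->]]].
    split; first by have [] := Gamma_sphere (imm i) dom.
    by have := lag i p dom; rewrite a0 dot30 add0r.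
  + exists (form_a (pullback_omega A)); split => // _ [i [p [dom ->]]].
    split; first by have [] := Gamma_sphere (imm i) dom.
    by have := lag i p dom; rewrite b0 dot30 addr0.
- case=> -[n [n0 sub]].
  + have [A orthA [b0 [lam _ a_n]]] := orthogonal_realizing_form_a n0.
    exists A, 0; split => //; apply/(lagrangean_move_patchP A 0 imm) => i p dom.
    have /sub [_ /= ortho] : gauss_image (@Gamma1 R) S (Gamma1 (S i) p) by exists i, p.
    by rewrite b0 dot30 addr0 a_n dot3Zl ortho mulr0.
  + have [A orthA [a0 [lam _ b_n]]] := orthogonal_realizing_form_b n0.
    exists A, 0; split => //; apply/(lagrangean_move_patchP A 0 imm) => i p dom.
    have /sub [_ /= ortho] : gauss_image (@Gamma2 R) S (Gamma2 (S i) p) by exists i, p.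
    by rewrite a0 dot30 add0r b_n dot3Zl ortho mulr0.
Qed.
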